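(* Let $G$ be a finite simple graph of order $n$ whose odd girth is $2k+1$ for some integer $k\geq 1$. Then $\mathrm{es}_{\Delta}(G)\leq \frac{k+1}{2k+1}\,n$.
   Context: The odd girth of $G$ is the length of a shortest odd cycle in $G$. $\mathrm{es}_{\Delta}(G)$ is the minimum number of edges of $G$ whose removal results in a subgraph with maximum degree $\Delta(G)-1$. *)

(* A finite simple graph is a symmetric irreflexive
   relation e on a finite vertex type T. *)
From mathcomp Require Import all_boot.
Set Implicit Arguments.
Unset Strict Implicit.
Unset Printing Implicit Defensive.

Section Graph.
Variables (T : finType) (e : rel T).

Definition edges : {set {set T}} :=
  [set [set x; y] | x in T, y in T & e x y].

(* degree of v in the spanning subgraph G - F (F a set of edges) *)
Definition deg_minus (F : {set {set T}}) (v : T) : nat :=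
  #|[set y | e v y & [set v; y] \notin F]|.

Definition deg (v : T) : nat := #|[set y | e v y]|.

Definition maxdeg : nat := \max_(v : T) deg v.
Definition maxdeg_minus (F : {set {set T}}) : nat := \max_(v : T) deg_minus F v.

Definition es_Delta : nat :=
  \big[minn/#|edges|]_(F in powerset edges | maxdeg_minus F == maxdeg.-1) #|F|.

Definition has_cycle_of_length (l : nat) : Prop :=
  exists s : seq T, [/\ uniq s, size s = l, 3 <= l & cycle e s].

Definition odd_girth_is (g : nat) : Prop :=
  [/\ odd g, has_cycle_of_length g &
      forall l, odd l -> l < g -> ~ has_cycle_of_length l].

End Graph.

From mathcomp Require Import all_boot zify.
Set Implicit Arguments.
Unset Strict Implicit.
Unset Printing Implicit Defensive.

(* Let S be the set of vertices of maximum degree.  Double counting shows that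
   S satisfies Hall's condition, so some injection f on S maps each v in S to
   a neighbour f v.  The functional graph of f on S splits into paths and
   cycles.  A cycle of length L is covered by uphalf L of its edges, and as odd
   cycles have length at least 2k+1 this is at most (k+1)/(2k+1) edges per
   vertex; an edge {v, f v} starting a path costs one edge for two vertices.
   Hence S is covered by at most (k+1)/(2k+1) |S :|: f @: S| edges.  A minimal
   subfamily still covering S removes an edge at every vertex of maximum degree
   and exactly one at some of them, so deleting it lowers the maximum degree
   by exactly one. *)

Section Hall.
Variable T : finType.

Definition nbh (r : rel T) (A : {set T}) : {set T} :=
  [set y | [exists x in A, r x y]].

Lemma nbhP (r : rel T) (A : {set T}) y :
  reflect (exists2 x, x \in A & r x y) (y \in nbh r A).
Proof. by rewrite inE; apply: (iffP exists_inP) => -[x]; exists x. Qed.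

Lemma nbhU (r : rel T) (A B : {set T}) : nbh r (A :|: B) = nbh r A :|: nbh r B.
Proof.
apply/setP => y; apply/nbhP/setUP => [[x /setUP[] xA rxy] | [] /nbhP[x xA rxy]].
- by left; apply/nbhP; exists x.
- by right; apply/nbhP; exists x.
- by exists x; rewrite // inE xA.
- by exists x; rewrite // inE xA orbT.
Qed.

Definition hall_condition (r : rel T) (S : {set T}) :=
  forall A : {set T}, A \subset S -> #|A| <= #|nbh r A|.

Definition has_sdr (r : rel T) (S : {set T}) :=
  exists2 f : T -> T, {in S, forall x, r x (f x)} & {in S &, injective f}.

Lemma hall_conditionS (r : rel T) (S S' : {set T}) :
  S' \subset S -> hall_condition r S -> hall_condition r S'.
Proof. by move=> sS'S hallS A sAS'; apply/hallS/(subset_trans sAS'). Qed.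

Section HallStep.
Variable S : {set T}.
Hypothesis IH : forall (r : rel T) (S' : {set T}),
  #|S'| < #|S| -> hall_condition r S' -> has_sdr r S'.

(* A tight proper subset A is matched into nbh r A; the rest of S is then
   matched while avoiding nbh r A. *)
Lemma hall_tight (r : rel T) (A : {set T}) :
  hall_condition r S -> A \subset S -> A != set0 -> A != S ->
  #|nbh r A| <= #|A| -> has_sdr r S.
Proof.
move=> hallS sAS A0 AS tightA.
have ltAS : #|A| < #|S| by apply: proper_card; rewrite properEneq AS.
have [f1 f1r f1i] := IH ltAS (hall_conditionS sAS hallS).
pose r' x y := r x y && (y \notin nbh r A).
have [f2 f2r f2i] : has_sdr r' (S :\: A).
  apply: IH; first by rewrite cardsD (setIidPr sAS) -card_gt0 in A0 *; lia.
  move=> B; rewrite subsetD => /andP[sBS BA].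
  have nbhBA : nbh r (B :|: A) \subset nbh r' B :|: nbh r A.
    apply/subsetP => y; rewrite nbhU !in_setU => /orP[/nbhP[x xB rxy] | ->].
      case: (boolP (y \in nbh r A)) => [_ | yA]; first by rewrite orbT.
      by apply/orP; left; apply/nbhP; exists x; rewrite /r' ?rxy.
    by rewrite orbT.
  have sBAS : B :|: A \subset S by rewrite subUset sBS sAS.
  have := hallS _ sBAS.
  rewrite cardsU disjoint_setI0 // cards0 subn0.
  move=> /leq_trans/(_ (subset_leq_card nbhBA)).
  by have := leq_card_setU (nbh r' B) (nbh r A); case; lia.
exists (fun x => if x \in A then f1 x else f2 x).
  move=> x xS; case: ifP => xA; first exact: f1r.
  by have /andP[] := f2r x ltac:(by rewrite inE xA xS).
have f1_nbh x : x \in A -> f1 x \in nbh r A.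
  by move=> xA; apply/nbhP; exists x; rewrite ?f1r.
have f2_nbh x : x \in S -> x \notin A -> f2 x \notin nbh r A.
  by move=> xS xA; have /andP[] := f2r x ltac:(by rewrite inE xA xS).
move=> x y xS yS; case: ifP => xA; case: ifP => yA.
- exact: f1i.
- by move=> fxy; have := f2_nbh y yS (negbT yA); rewrite -fxy f1_nbh.
- by move=> fxy; have := f2_nbh x xS (negbT xA); rewrite fxy f1_nbh.
- by apply: f2i; rewrite inE ?xA ?yA.
Qed.

(* If every proper subset has a surplus neighbour, any pair x, y with r x y
   can be fixed and the rest of S matched while avoiding y. *)
Lemma hall_surplus (r : rel T) :
  hall_condition r S -> S != set0 ->
  (forall A : {set T}, A \subset S -> A != set0 -> A != S -> #|A| < #|nbh r A|) ->
  has_sdr r S.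
Proof.
move=> hallS /set0Pn[x xS] surplus.
have : 0 < #|nbh r [set x]| by apply: leq_trans (hallS _ _); rewrite ?cards1 ?sub1set.
case/card_gt0P => y /nbhP[_ /set1P-> rxy].
pose r' a b := r a b && (b != y).
have [f f_r' f_inj] : has_sdr r' (S :\ x).
  apply: IH; first by rewrite (cardsD1 x S) xS.
  move=> B; rewrite subsetD1 => /andP[sBS xB].
  have [-> | B0] := eqVneq B set0; first by rewrite cards0.
  have BS : B != S by apply: contraNneq xB => ->.
  have nbhB : nbh r B :\ y \subset nbh r' B.
    apply/subsetP => z /setD1P[zy /nbhP[w wB rwz]].
    by apply/nbhP; exists w; rewrite // /r' rwz zy.
  have := surplus B sBS B0 BS; have := cardsD1 y (nbh r B).
  by have := subset_leq_card nbhB; lia.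
exists (fun a => if a == x then y else f a).
  move=> a aS; case: eqP => [-> // | /eqP ax].
  by have /andP[] := f_r' a ltac:(by rewrite !inE ax).
have f_y a : a \in S -> a != x -> f a != y.
  by move=> aS ax; have /andP[] := f_r' a ltac:(by rewrite !inE ax).
move=> a b aS bS; case: eqVneq => [-> | ax]; case: eqVneq => [-> // | bx].
- by move=> yfb; have := f_y b bS bx; rewrite yfb eqxx.
- by move=> fay; have := f_y a aS ax; rewrite fay eqxx.
- by apply: f_inj; rewrite !inE ?ax ?bx.
Qed.

End HallStep.

Theorem hall (r : rel T) (S : {set T}) : hall_condition r S -> has_sdr r S.
Proof.
move: {2}#|S| (leqnn #|S|) => n; elim: n r S => [|n IHn] r S.
  rewrite leqn0 cards_eq0 => /eqP-> _.
  by exists id => x; rewrite inE.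
move=> leSn hallS.
have IH r' (S' : {set T}) : #|S'| < #|S| -> hall_condition r' S' -> has_sdr r' S'.
  by move=> ltS'; apply: IHn; lia.
have [-> | S0] := eqVneq S set0; first by exists id => x; rewrite inE.
pose tight (A : {set T}) := [&& A \subset S, A != set0, A != S & #|nbh r A| <= #|A|].
case: (boolP [exists A, tight A]).
  by case/existsP => A /and4P[sAS A0 AS tightA]; apply: hall_tight tightA.
move/existsPn => surplus; apply: hall_surplus => // A sAS A0 AS.
by have := surplus A; rewrite /tight sAS A0 AS ltnNge.
Qed.

End Hall.

Lemma bigmin_leq (I : eqType) (r : seq I) (P : pred I) (F : I -> nat) x0 j :
  j \in r -> P j -> \big[minn/x0]_(i <- r | P i) F i <= F j.
Proof.
elim: r => //= a r IHr; rewrite big_cons inE => /predU1P[<- -> | jr Pj].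
  exact: geq_minl.
by case: (P a); [apply: leq_trans (geq_minr _ _) _ |]; apply: IHr.
Qed.

Section Degrees.
Variables (T : finType) (e : rel T).
Hypotheses (e_sym : symmetric e) (e_irr : irreflexive e).

Definition maxdeg_set := [set v | deg e v == maxdeg e].

Definition edges_at (F : {set {set T}}) (v : T) := [set E in F | v \in E].

Lemma deg_le_maxdeg v : deg e v <= maxdeg e.
Proof. exact: (@leq_bigmax _ (fun v => deg e v) v). Qed.

Lemma maxdeg_gt0 x y : e x y -> 0 < maxdeg e.
Proof.
move=> exy; apply: leq_trans (deg_le_maxdeg x).
by apply/card_gt0P; exists y; rewrite inE.
Qed.

Lemma maxdeg_attained : 0 < maxdeg e -> exists v, deg e v = maxdeg e.
Proof.
case: (pickP T) => [v _ | T0] maxdeg_pos.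
  have /(eq_bigmax (fun v => deg e v))[w maxdeg_w] : 0 < #|T|.
    by apply/card_gt0P; exists v.
  by exists w; rewrite /maxdeg maxdeg_w.
by move: maxdeg_pos; rewrite /maxdeg big_pred0.
Qed.

Lemma edgesP E :
  reflect (exists x y, e x y /\ E = [set x; y]) (E \in edges e).
Proof.
apply: (iffP imset2P) => [[x y _] | [x [y [exy ->]]]].
  by rewrite inE => exy ->; exists x, y.
by exists x y; rewrite ?inE.
Qed.

Lemma edge_end E v : E \in edges e -> v \in E -> exists2 u, e v u & E = [set v; u].
Proof.
case/edgesP => x [y [exy ->]] /set2P[] ->; first by exists y.
by exists x; rewrite 1?e_sym // setUC.
Qed.

(* y |-> [set v; y] maps the lost neighbours of v bijectively onto edges_at F v. *)
Lemma deg_minus_edges_at (F : {set {set T}}) v :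
  F \subset edges e -> deg_minus e F v + #|edges_at F v| = deg e v.
Proof.
move=> Fe; rewrite /deg_minus /deg.
rewrite -(cardsID [set y | [set v; y] \in F] [set y | e v y]) [RHS]addnC.
congr (_ + _); first by apply: eq_card => y; rewrite !inE andbC.
have inj : {in [set y | e v y] :&: [set y | [set v; y] \in F] &,
              injective (fun y => [set v; y])}.
  move=> y z; rewrite !inE => /andP[evy _] _ eq_vy_vz.
  have : y \in [set v; z] by rewrite -eq_vy_vz set22.
  by case/set2P => // yv; move: evy; rewrite yv e_irr.
rewrite -(card_in_imset inj); apply: eq_card => E; rewrite !inE.
apply/andP/imsetP => [[EF vE] | [y]].
  have [u evu Evu] := edge_end (subsetP Fe E EF) vE.
  by exists u; rewrite // !inE evu -Evu EF.
by rewrite !inE => /andP[_ vyF] ->; rewrite vyF set21.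
Qed.

Lemma deg_sum v : deg e v = \sum_y e v y.
Proof.
rewrite /deg -sum1_card big_mkcond.
by apply: eq_bigr => y _; rewrite inE; case: (e v y).
Qed.

(* Double counting the pairs x, y with x in A and e x y: there are maxdeg e
   of them for each x in A and at most maxdeg e for each y in nbh e A. *)
Lemma hall_maxdeg : 0 < maxdeg e -> hall_condition e maxdeg_set.
Proof.
move=> maxdeg_pos A sAS; rewrite -(leq_pmul2r maxdeg_pos) -!sum_nat_const.
have -> : \sum_(x in A) maxdeg e = \sum_(x in A) \sum_(y in nbh e A) e x y.
  apply: eq_bigr => x xA; have := subsetP sAS x xA; rewrite inE => /eqP <-.
  rewrite deg_sum [RHS]big_mkcond; apply: eq_bigr => y _ /=.
  case: ifP => // /negbT yA; apply/eqP; rewrite eqb0; apply: contra yA => exy.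
  by apply/nbhP; exists x.
rewrite exchange_big /=; apply: leq_sum => y _.
apply: leq_trans (deg_le_maxdeg y); rewrite deg_sum big_mkcond.
by apply: leq_sum => x _; rewrite e_sym; case: (x \in A).
Qed.

Lemma cover_edges_at (F : {set {set T}}) v : (v \in cover F) = (0 < #|edges_at F v|).
Proof.
apply/bigcupP/card_gt0P => [[E EF vE] | [E]]; first by exists E; rewrite inE EF.
by rewrite inE => /andP[EF vE]; exists E.
Qed.

Lemma es_Delta_leq (F : {set {set T}}) :
  F \subset edges e -> maxdeg_minus e F = (maxdeg e).-1 -> es_Delta e <= #|F|.
Proof.
move=> Fe F_maxdeg; rewrite /es_Delta; apply: bigmin_leq; first exact: mem_index_enum.
by rewrite powersetE Fe F_maxdeg eqxx.
Qed.

Lemma maxdeg_minus_cover (F : {set {set T}}) w :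
  F \subset edges e -> maxdeg_set \subset cover F ->
  w \in maxdeg_set -> #|edges_at F w| = 1 -> maxdeg_minus e F = (maxdeg e).-1.
Proof.
move=> Fe SF wS w_once; apply/eqP; rewrite eqn_leq; apply/andP; split.
  apply/bigmax_leqP => v _; have := deg_minus_edges_at v Fe; have := deg_le_maxdeg v.
  case: (boolP (v \in maxdeg_set)) => [/(subsetP SF) | ].
    by rewrite cover_edges_at; lia.
  by rewrite inE; lia.
have := deg_minus_edges_at w Fe; move: wS; rewrite inE w_once => /eqP->.
by rewrite addn1 => <-; apply: (@leq_bigmax _ (fun v => deg_minus e F v)).
Qed.

(* A minimal subcover G of F has a vertex covered only once, as otherwise
   any edge could be dropped from G. *)
Lemma es_Delta_leq_cover (F : {set {set T}}) :
  0 < maxdeg e -> F \subset edges e -> maxdeg_set \subset cover F -> es_Delta e <= #|F|.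
Proof.
move=> maxdeg_pos Fe SF.
pose covers (G : {set {set T}}) := (G \subset F) && (maxdeg_set \subset cover G).
have covers_F : covers F by rewrite /covers subxx.
have [G /andP[GF SG] G_min] := @arg_minnP _ F covers (fun G => #|G|) covers_F.
have Ge := subset_trans GF Fe.
apply: leq_trans (subset_leq_card GF); apply: es_Delta_leq => //.
have [v0 deg_v0] := maxdeg_attained maxdeg_pos.
have /bigcupP[E0 E0G _] : v0 \in cover G by rewrite (subsetP SG) // inE deg_v0.
have /subsetPn[w wS w_uncovered] : ~~ (maxdeg_set \subset cover (G :\ E0)).
  apply/negP => SG'; have := G_min (G :\ E0).
  rewrite /covers SG' (subset_trans (subsetDl _ _) GF) (cardsD1 E0 G) E0G.
  by move=> /(_ isT); lia.
apply: (maxdeg_minus_cover Ge SG wS); apply/eqP; rewrite eqn_leq -cover_edges_at.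
rewrite (subsetP SG) // andbT -(cards1 E0) subset_leq_card //.
apply/subsetP => E; rewrite !inE => /andP[EG wE]; apply: contraNT w_uncovered => EE0.
by apply/bigcupP; exists E; rewrite // !inE EE0.
Qed.

End Degrees.

Lemma uphalf_weight k n :
  1 < n -> (odd n -> k.*2.+1 <= n) -> k.*2.+1 * uphalf n <= k.+1 * n.
Proof.
move=> n1; rewrite uphalf_half; have := odd_double_half n.
by case: (odd n) => [n_odd /(_ isT) | n_even _]; nia.
Qed.

Section EdgeCovers.
Variables (T : finType) (e : rel T) (k : nat).

Lemma cycle_cover_uphalf (s : seq T) : cycle e s ->
  exists2 F : {set {set T}}, F \subset edges e &
    ([set x in s] \subset cover F) && (#|F| <= uphalf (size s)).
Proof.
case: s => [_ | x0 s /pathP cyc].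
  by exists set0; rewrite ?sub0set ?cards0 ?andbT.
pose p := x0 :: rcons s x0.
pose F := [set [set nth x0 p i.*2; nth x0 p i.*2.+1] | i : 'I_(uphalf (size s).+1)].
exists F.
  apply/subsetP => _ /imsetP[i _ ->]; apply/edgesP; do 2!eexists; split=> //.
  by apply: cyc; rewrite size_rcons; have := ltn_ord i; lia.
apply/andP; split; last by rewrite (leq_trans (leq_imset_card _ _)) ?card_ord.
apply/subsetP => x; rewrite inE => /(nthP x0)[j lt_j_s <-].
have lt_j2 : j./2 < uphalf (size s).+1 by move: lt_j_s => /=; lia.
apply/bigcupP; exists [set nth x0 p (j./2).*2; nth x0 p (j./2).*2.+1].
  by apply/imsetP; exists (Ordinal lt_j2).
have -> : nth x0 (x0 :: s) j = nth x0 p j by rewrite /p -rcons_cons nth_rcons lt_j_s.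
move: (odd_double_half j); set h := j./2.
by case: (odd j) => <-; rewrite ?add1n ?add0n !inE eqxx ?orbT.
Qed.

Definition covered_within (A W : {set T}) : Prop :=
  exists2 F : {set {set T}}, F \subset edges e &
    (A \subset cover F) && (k.*2.+1 * #|F| <= k.+1 * #|W|).

Lemma covered_within0 : covered_within set0 set0.
Proof. by exists set0; rewrite ?sub0set ?cards0 ?muln0. Qed.

Lemma covered_withinS (A A' W W' : {set T}) :
  A' \subset A -> W \subset W' -> covered_within A W -> covered_within A' W'.
Proof.
move=> sA sW [F Fe /andP[AF FW]]; exists F => //.
by rewrite (subset_trans sA AF) (leq_trans FW) // leq_mul2l subset_leq_card ?orbT.
Qed.

Lemma covered_withinU (A1 A2 W1 W2 : {set T}) : [disjoint W1 & W2] ->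
  covered_within A1 W1 -> covered_within A2 W2 ->
  covered_within (A1 :|: A2) (W1 :|: W2).
Proof.
move=> W12 [F1 F1e /andP[AF1 FW1]] [F2 F2e /andP[AF2 FW2]].
exists (F1 :|: F2); first by rewrite subUset F1e F2e.
rewrite /cover bigcup_setU setUSS //=.
rewrite cardsU disjoint_setI0 // cards0 subn0 mulnDr.
apply: leq_trans (leq_add FW1 FW2); rewrite -mulnDr leq_mul2l.
by rewrite (leq_card_setU F1 F2) orbT.
Qed.

Hypothesis e_irr : irreflexive e.
Hypothesis long_odd : forall l, odd l -> l < k.*2.+1 -> ~ has_cycle_of_length e l.

Lemma edge_covered x y : e x y -> covered_within [set x; y] [set x; y].
Proof.
move=> exy; exists [set [set x; y]].
  by rewrite sub1set; apply/edgesP; exists x, y.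
have x_neq_y : x != y by apply: contraTneq exy => ->; rewrite e_irr.
by rewrite /cover big_set1 subxx cards1 cards2 x_neq_y /=; lia.
Qed.

Lemma cycle_covered (s : seq T) : uniq s -> cycle e s ->
  covered_within [set x in s] [set x in s].
Proof.
move=> s_uniq s_cyc.
have [s0 | s_gt1] : s = [::] \/ 1 < size s.
  by move: s_cyc; case: s {s_uniq} => [|x [|y s]] /=; [left | rewrite e_irr | right].
  by rewrite s0; apply: (covered_withinS _ _ covered_within0).
have [F Fe /andP[sF F_half]] := cycle_cover_uphalf s_cyc.
exists F; rewrite // sF /= cardsE (card_uniqP s_uniq).
apply: leq_trans (_ : k.*2.+1 * uphalf (size s) <= _).
  by rewrite leq_mul2l F_half orbT.
apply: uphalf_weight => // s_odd; rewrite leqNgt; apply/negP => s_short.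
apply: (long_odd s_odd s_short); exists s; split=> //.
by move: s_odd s_gt1; case: (size s) => [|[|[|]]].
Qed.

Section Peel.
Variables (D : {set T}) (f : T -> T).
Hypotheses (f_edge : {in D, forall x, e x (f x)}) (f_inj : {in D &, injective f}).

Definition peel (C : {set T}) : Prop :=
  [/\ C :&: D != set0, C \subset D :|: f @: D,
      [disjoint C & (D :\: C) :|: f @: (D :\: C)] & covered_within C C].

Lemma peel_path v : v \in D -> v \notin f @: D -> peel [set v; f v].
Proof.
move=> vD v_fD; split.
- by apply/set0Pn; exists v; rewrite !inE eqxx vD.
- by rewrite subUset !sub1set !inE vD imset_f ?orbT.
- rewrite disjoint_sym disjoints_subset; apply/subsetP => x.
  rewrite in_setU in_setC => /orP[/setDP[] // | /imsetP[y /setDP[yD y_vfv] ->]].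
  apply/set2P => -[fy_v | fy_fv]; first by move: v_fD; rewrite -fy_v imset_f.
  by move: y_vfv; rewrite (f_inj yD vD fy_fv) !inE eqxx.
- exact: edge_covered (f_edge vD).
Qed.

(* When f maps D onto itself, f permutes D and its orbits are cycles of e. *)
Lemma peel_orbit v : D \subset f @: D -> v \in D -> peel [set x in orbit f v].
Proof.
move=> D_fD vD.
have fD_D : f @: D = D.
  by apply/eqP; rewrite eq_sym eqEcard D_fD leq_imset_card.
have f_D : {homo f : x / x \in D} by move=> x xD; rewrite -fD_D imset_f.
have orbit_D x : x \in orbit f v -> x \in D.
  by rewrite -fconnect_orbit => /iter_findex <-; apply: iter_in.
split.
- by apply/set0Pn; exists v; rewrite !inE in_orbit vD.
- by apply/subsetP => x; rewrite inE => /orbit_D xD; rewrite inE xD.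
- rewrite disjoint_sym disjoints_subset; apply/subsetP => x.
  rewrite in_setU in_setC => /orP[/setDP[] // | /imsetP[y /setDP[yD y_orb] ->]].
  apply: contra y_orb; rewrite !inE -!fconnect_orbit => v_fy.
  have fyD : f y \in D by apply: f_D.
  rewrite (fconnect_sym_in f_D f_inj) // (connect_trans (fconnect1 f y)) //.
  by rewrite (fconnect_sym_in f_D f_inj).
- apply: cycle_covered; first exact: orbit_uniq.
  have f_e : {in D &, subrel (frel f) e} by move=> x y xD _ /eqP <-; apply: f_edge.
  apply: (sub_in_cycle f_e); first by apply/allP => x /orbit_D.
  exact: (cycle_orbit_in f_D f_inj vD).
Qed.

Lemma exists_peel : D != set0 -> exists C, peel C.
Proof.
case/set0Pn => v vD; have [D_fD | /subsetPn[w wD w_fD]] := boolP (D \subset f @: D).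
  by exists [set x in orbit f v]; apply: peel_orbit.
by exists [set w; f w]; apply: peel_path.
Qed.

End Peel.

(* Peel off a path edge or a whole f-orbit C and recurse on D :\: C; the
   disjointness required by peel makes the two budgets add up. *)
Lemma injection_covered (D : {set T}) (f : T -> T) :
  {in D, forall x, e x (f x)} -> {in D &, injective f} ->
  covered_within D (D :|: f @: D).
Proof.
move: {2}#|D| (leqnn #|D|) => n; elim: n D => [|n IHn] D D_le f_edge f_inj.
  move: D_le; rewrite leqn0 cards_eq0 => /eqP->.
  by rewrite imset0 setU0; apply: covered_within0.
have [-> | D0] := eqVneq D set0; first by rewrite imset0 setU0; apply: covered_within0.
have [C [CD0 C_sub C_disj C_cov]] := exists_peel f_edge f_inj D0.
have sD'D : D :\: C \subset D := subsetDl D C.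
have D'_le : #|D :\: C| <= n.
  by move: CD0; rewrite -card_gt0 cardsD setIC; lia.
have := IHn _ D'_le (sub_in1 (subsetP sD'D) f_edge) (sub_in2 (subsetP sD'D) f_inj).
move/(covered_withinU C_disj C_cov)/covered_withinS; apply.
  by apply/subsetP => x xD; rewrite !inE xD andbT orbN.
rewrite !subUset C_sub (subset_trans sD'D (subsetUl _ _)).
exact: subset_trans (imsetS f sD'D) (subsetUr _ _).
Qed.

End EdgeCovers.

Unset Implicit Arguments.
Set Strict Implicit.

Theorem theorem3p3 (T : finType) (e : rel T) (k : nat) :
  symmetric e -> irreflexive e -> 1 <= k ->
  odd_girth_is e k.*2.+1 ->
  k.*2.+1 * es_Delta e <= k.+1 * #|T|.
Proof.
(* 1 <= k is implied by the odd girth hypothesis, as cycles have length >= 3. *)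
move=> e_sym e_irr _ [_ [s [_ s_size s_ge3 s_cyc]] long_odd].
have [x [y exy]] : exists x y, e x y.
  move: s_ge3 s_cyc; rewrite -s_size.
  by case: s {s_size} => [|x [|y s]] // _ /= /andP[exy _]; exists x, y.
have maxdeg_pos := maxdeg_gt0 exy.
have [f f_edge f_inj] := hall (hall_maxdeg e_sym maxdeg_pos).
have [F Fe /andP[SF F_bound]] := injection_covered e_irr long_odd f_edge f_inj.
apply: leq_trans (leq_trans F_bound _).
  by rewrite leq_mul2l es_Delta_leq_cover ?orbT.
by rewrite leq_mul2l max_card orbT.
Qed.
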